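(* Let $0<\alpha<1<\eta<2$ and let $D\subseteq\mathbb R^d$ have the property: for each $i\in\{1,\dots,d\}$ with $\mathfrak s_i=1$, if $x,y\in D$ then $y+d(x,y)\mathbf e_i\in D$. Then for all germs $U$ over $D$ and all $R>0$, $$\sup_{x\in D}[U_x]_{C^\alpha(D\cap B_R(x))}\lesssim\big(\|U\|_{G^\eta(D)}+[U]_{G^{\eta,\alpha}(D)}\big)R^{\eta-\alpha},$$ with an implicit constant independent of $U$, $R$ and $D$.
   Context: Fix a scaling $\mathfrak s\in\mathbb N^d$; for $\beta\in\mathbb N_0^d$, $|\beta|:=\sum_i\mathfrak s_i\beta_i$; $d(x,y):=\sum_i|x_i-y_i|^{1/\mathfrak s_i}$, $B_R(x)$ the open ball for $d$, $\mathcal P_k$ the polynomials $\sum_{|\beta|\le k}c_\beta z^\beta$. A germ over $D$ is a family $U=(U_x)_{x\in D}$ of continuous $U_x:D\to\mathbb C$; $\|U\|_{G^\eta(D)}$ is the infimum of $M>0$ with $|U_x(y)|\le M\,d(x,y)^\eta$ for all $x,y\in D$; $[U]_{G^{\eta,\alpha}(D)}$ is the infimum of $M>0$ such that for all $x,y\in D$ there is $P\in\mathcal P_{\lfloor\eta\rfloor}$ with $|(U_x-U_y-P)(z)|\le M\,d(y,z)^\alpha(d(x,y)+d(y,z))^{\eta-\alpha}$ for all $z\in D$. For $\alpha\in(0,1)$ and $A\subseteq\mathbb R^d$, $[f]_{C^\alpha(A)}:=\sup_{y,z\in A,\,y\ne z}|f(y)-f(z)|/d(y,z)^\alpha$. 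*)

From HB Require Import structures.
From mathcomp Require Import all_boot all_order all_algebra.
From mathcomp Require Import all_classical all_reals all_analysis.
From mathcomp Require Import complex.
Set Implicit Arguments. Unset Strict Implicit. Unset Printing Implicit Defensive.
Import Order.TTheory GRing.Theory Num.Theory.
Local Open Scope classical_set_scope.
Local Open Scope ring_scope.

Section Defs.
Variables (R : realType) (d : nat) (s : 'I_d -> nat).

Definition pt := 'I_d -> R.

Definition cmod (z : R[i]) : R := ComplexField.Normc.normc z.

Definition sdist (x y : pt) : R :=
  \sum_(i < d) powR `|x i - y i| (1 / (s i)%:R).

Definition sball (x : pt) (r : R) : set pt := [set y | sdist x y < r].

Definition evec (i : 'I_d) : pt := fun j => if j == i then 1 else 0.

(* continuity of f : D -> C (w.r.t. the metric sdist, which induces the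
   Euclidean topology) *)
Definition cont_on (D : set pt) (f : pt -> R[i]) : Prop :=
  forall y, D y -> forall eps : R, 0 < eps -> exists2 del : R, 0 < del &
    forall z, D z -> sdist y z < del -> cmod (f y - f z) < eps.

Definition is_germ (D : set pt) (U : pt -> pt -> R[i]) : Prop :=
  forall x, D x -> cont_on D (U x).

Definition Gnorm (eta : R) (D : set pt) (U : pt -> pt -> R[i]) : \bar R :=
  ereal_inf [set M%:E | M in [set M : R | 0 < M /\
     forall x y, D x -> D y -> cmod (U x y) <= M * powR (sdist x y) eta]].

Definition is_poly_k (k : nat) (P : pt -> R[i]) : Prop :=
  exists (N : nat) (beta : 'I_N -> 'I_d -> nat) (c : 'I_N -> R[i]),
    (forall n, (\sum_(i < d) s i * beta n i <= k)%N) /\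
    forall z, P z = \sum_(n < N) c n * \prod_(i < d) (((z i)%:C)%C ^+ beta n i).

Definition Gsemi (eta alpha : R) (D : set pt) (U : pt -> pt -> R[i]) : \bar R :=
  ereal_inf [set M%:E | M in [set M : R | 0 < M /\
     forall x y, D x -> D y -> exists P, is_poly_k `|Num.floor eta|%N P /\
       forall z, D z -> cmod (U x z - U y z - P z) <=
         M * powR (sdist y z) alpha * powR (sdist x y + sdist y z) (eta - alpha)]].

Definition Hsemi (alpha : R) (A : set pt) (f : pt -> R[i]) : \bar R :=
  ereal_sup [set e | exists y z, A y /\ A z /\ y <> z /\
     e = ((cmod (f y - f z)) / powR (sdist y z) alpha)%:E].

End Defs.

(* Fix x, points y, z of D within distance r of x, and put h = d(x,y),
   delta = d(y,z).  If h <= delta, the G^eta bound alone gives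
   |U_x(y) - U_x(z)| <~ delta^eta <~ delta^alpha r^(eta-alpha).  Otherwise take
   the polynomial P of the G^(eta,alpha) bound for the pair (x,y); since
   U_y(y) = 0 we have P(y) = U_x(y), so
     U_x(y) - U_x(z) = (P(y) - P(z)) - U_y(z) - (U_x(z) - U_y(z) - P(z)),
   and the last two terms are <~ delta^alpha h^(eta-alpha).  As eta < 2, P is
   affine in the coordinates of scaling 1, and evaluating the G^(eta,alpha)
   bound at the point y + h e_i, which lies in D by assumption, bounds the
   slope of P in direction e_i by h^(eta-1).  Hence
   |P(y) - P(z)| <~ h^(eta-1) delta <= delta^alpha h^(eta-alpha). *)

From HB Require Import structures.
From mathcomp Require Import all_boot all_order all_algebra.
From mathcomp Require Import all_classical all_reals all_analysis.
From mathcomp Require Import complex.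
From mathcomp Require Import zify ring lra.
Import Order.TTheory GRing.Theory Num.Theory.
Local Open Scope classical_set_scope.
Local Open Scope ring_scope.
Set Implicit Arguments. Unset Strict Implicit.

Section ComplexModulus.
Context {R : realType}.
Implicit Types a b : R[i].

(* [cmod] is the norm of the normed-module copy [Rcomplex R] of [R[i]], so the
   generic norm lemmas apply to it by conversion. *)
Lemma cmod0 : cmod (0 : R[i]) = 0.
Proof. exact: (@normr0 R (Rcomplex R)). Qed.

Lemma cmod_le0 a : (cmod a <= 0) = (a == 0).
Proof. exact: (@normr_le0 R (Rcomplex R)). Qed.

Lemma ler_cmodD a b : cmod (a + b) <= cmod a + cmod b.
Proof. exact: (@ler_normD R (Rcomplex R)). Qed.

Lemma cmodN a : cmod (- a) = cmod a.
Proof. exact: (@normrN R (Rcomplex R)). Qed.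

Lemma ler_cmodB a b : cmod (a - b) <= cmod a + cmod b.
Proof. by apply: le_trans (ler_cmodD _ _) _; rewrite cmodN. Qed.

Lemma ler_cmod_sum n (F : 'I_n -> R[i]) :
  cmod (\sum_(k < n) F k) <= \sum_(k < n) cmod (F k).
Proof. exact: (@ler_norm_sum R (Rcomplex R)). Qed.

Lemma cmodM a b : cmod (a * b) = cmod a * cmod b.
Proof. exact: ComplexField.Normc.normcM. Qed.

Lemma cmod_real (k : R) : cmod (k%:C)%C = `|k|.
Proof. by rewrite /cmod /= expr0n /= addr0 sqrtr_sqr. Qed.

End ComplexModulus.

Section PowR.
Context {R : realType}.
Implicit Types a b p q u x : R.

Lemma powR_subadditive p a b : 0 < p -> p <= 1 -> 0 <= a -> 0 <= b ->
  (a + b) `^ p <= a `^ p + b `^ p.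
Proof.
move=> p_gt0 p_le1 a_ge0 b_ge0.
have [ab0|ab_neq0] := eqVneq (a + b) 0.
  by rewrite ab0 powR0 ?gt_eqF// addr_ge0 ?powR_ge0.
have ab_gt0 : 0 < a + b by rewrite lt_neqAle eq_sym ab_neq0 addr_ge0.
have le_powR u : 0 <= u <= 1 -> u <= u `^ p.
  case/andP=> u_ge0 u_le1; have [->|u_neq0] := eqVneq u 0; first exact: powR_ge0.
  by rewrite ger1_powR // u_le1 andbT lt_neqAle eq_sym u_neq0.
pose t := a / (a + b).
have t_ge0 : 0 <= t by rewrite divr_ge0 // ltW.
have t_le1 : t <= 1 by rewrite ler_pdivrMr // mul1r lerDl.
have -> : a `^ p + b `^ p = (t `^ p + (1 - t) `^ p) * (a + b) `^ p.
  rewrite mulrDl -!powRM ?subr_ge0 ?(ltW ab_gt0) // mulrBl mul1r /t mulfVK //.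
  by rewrite [a + b]addrC addrK.
rewrite -[X in X <= _]mul1r ler_wpM2r ?powR_ge0 //.
rewrite -[X in X <= _](subrKC t) lerD ?le_powR ?t_ge0 ?t_le1 //.
by rewrite subr_ge0 t_le1 lerBlDr lerDl t_ge0.
Qed.

Lemma powR_le_double q u x : 0 <= q <= 2 -> 0 <= u <= 2 * x ->
  u `^ q <= 4 * x `^ q.
Proof.
case/andP=> q_ge0 q_le2 /andP[u_ge0 u_le2x].
have x_ge0 : 0 <= x by rewrite -(pmulr_rge0 _ (ltr0n _ 2)) (le_trans u_ge0).
apply: (le_trans (ge0_ler_powR q_ge0 _ _ u_le2x)); rewrite ?nnegrE ?mulr_ge0 //.
rewrite powRM // ler_wpM2r ?powR_ge0 //.
have -> : 4 = 2 `^ 2%:R :> R by rewrite powR_mulrn // expr2; lra.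
by rewrite ler_powR ?ler1n.
Qed.

Lemma powR_mul_sub alpha eta u : eta != 0 ->
  u `^ alpha * u `^ (eta - alpha) = u `^ eta.
Proof. by move=> eta_neq0; rewrite -powRD subrKC // (negbTE eta_neq0). Qed.

Lemma powR_le_split alpha eta u x : 0 < alpha <= eta -> 0 <= u <= x ->
  u `^ eta <= u `^ alpha * x `^ (eta - alpha).
Proof.
case/andP=> alpha_gt0 alpha_le_eta /andP[u_ge0 u_le_x].
rewrite -(powR_mul_sub alpha) ?gt_eqF ?(lt_le_trans alpha_gt0) //.
rewrite ler_wpM2l ?powR_ge0 // ge0_ler_powR ?nnegrE ?subr_ge0 //.
exact: le_trans u_le_x.
Qed.

Lemma powR_interp_le alpha eta u x : 0 < alpha <= 1 -> 0 <= u <= x -> 0 < x ->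
  x `^ (eta - 1) * u <= u `^ alpha * x `^ (eta - alpha).
Proof.
move=> alpha01 ux x_gt0; have u_ge0 : 0 <= u by case/andP: ux.
have := powR_le_split alpha01 ux; rewrite powRr1 //.
move=> /(ler_wpM2l (powR_ge0 x (eta - 1))) /le_trans; apply.
rewrite mulrCA -powRD; last by rewrite (gt_eqF x_gt0) implybT.
by rewrite subrKA.
Qed.

Lemma ler_wpdivrMr a b x : 0 <= b -> 0 <= x -> a <= x * b -> a / b <= x.
Proof.
rewrite le_eqVlt => /predU1P[<- x_ge0 _|b_gt0 _]; first by rewrite invr0 mulr0.
by rewrite ler_pdivrMr.
Qed.

End PowR.

Lemma le_ereal_infD {R : realType} (A B : set R) (v : R) :
  (forall a, A a -> 0 <= a) -> (forall b, B b -> 0 <= b) ->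
  (forall a b, A a -> B b -> v <= a + b) ->
  (v%:E <= ereal_inf (EFin @` A) + ereal_inf (EFin @` B))%E.
Proof.
move=> A_ge0 B_ge0 vAB.
have le_infE (S : set R) (x : R) : (forall a, S a -> x <= a) ->
    (x%:E <= ereal_inf (EFin @` S))%E.
  by move=> xS; apply: le_ereal_inf_tmp => _ [a Sa <-]; rewrite lee_fin xS.
have := le_infE _ _ A_ge0; have := le_infE _ _ B_ge0.
case EB: (ereal_inf (EFin @` B)) => [beta| |] //;
  case EA: (ereal_inf (EFin @` A)) => [alpha| |] // B_ge0' A_ge0'.
- suff : ((v - alpha)%:E <= beta%:E)%E by rewrite -EFinD !lee_fin; lra.
  rewrite -EB; apply: (le_infE B) => b Bb.
  suff : ((v - b)%:E <= alpha%:E)%E by rewrite lee_fin; lra.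
  by rewrite -EA; apply: (le_infE A) => a Aa; have := vAB a b Aa Bb; lra.
all: by rewrite ?addey ?addye ?leey.
Qed.

Section ScaledDistance.
Context {R : realType} {d : nat} (s : 'I_d -> nat).
Hypothesis s_gt0 : forall i, (0 < s i)%N.
Implicit Types x y z : pt R d.

Lemma inv_scaling_gt0 i : 0 < 1 / (s i)%:R :> R.
Proof. by rewrite div1r invr_gt0 ltr0n s_gt0. Qed.

Lemma inv_scaling_le1 i : 1 / (s i)%:R <= 1 :> R.
Proof. by rewrite div1r invf_le1 ?ler1n ?ltr0n ?s_gt0. Qed.

Lemma sdist_ge0 x y : 0 <= sdist s x y.
Proof. by apply: sumr_ge0 => i _; exact: powR_ge0. Qed.

Lemma sdistC x y : sdist s x y = sdist s y x.
Proof. by apply: eq_bigr => i _; rewrite distrC. Qed.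

Lemma sdistxx x : sdist s x x = 0.
Proof.
by rewrite /sdist big1 // => i _; rewrite subrr normr0 powR0 // gt_eqF ?inv_scaling_gt0.
Qed.

Lemma sdist_triangle x y z : sdist s x z <= sdist s x y + sdist s y z.
Proof.
rewrite /sdist -big_split /=; apply: ler_sum => i _.
apply: le_trans _ (powR_subadditive (inv_scaling_gt0 i) (inv_scaling_le1 i)
  (normr_ge0 _) (normr_ge0 _)).
rewrite ge0_ler_powR ?nnegrE ?addr_ge0 ?(ltW (inv_scaling_gt0 i)) //.
by rewrite -[x i - z i](subrKA (y i)) ler_normD.
Qed.

Lemma sdist_evec y i h : s i = 1%N -> 0 <= h -> sdist s y (y + h *: evec R i) = h.
Proof.
move=> si1 h_ge0.
have shiftE j : (y + h *: evec R i) j = y j + h * (if j == i then 1 else 0) by [].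
rewrite /sdist (bigD1 i) //= big1 => [|j ji]; rewrite shiftE.
  by rewrite eqxx mulr1 si1 divr1 powRr1 // opprD addrA subrr sub0r normrN ger0_norm ?addr0.
by rewrite (negbTE ji) mulr0 addr0 subrr normr0 powR0 // gt_eqF ?inv_scaling_gt0.
Qed.

End ScaledDistance.

Section UnitScaledAffine.
Context {R : realType} {d : nat} (s : 'I_d -> nat).
Hypothesis s_gt0 : forall i, (0 < s i)%N.
Implicit Types (P Q : pt R d -> R[i]) (a b : 'I_d -> R[i]).

(* Affine functions that only depend on the coordinates of scaling one: these
   are exactly the elements of [P_1]. *)
Definition s_affine a P :=
  (forall i, s i != 1%N -> a i = 0) /\
  exists c, forall z, P z = c + \sum_(i < d) a i * ((z i)%:C)%C.

Lemma eq_s_affine a P Q : P =1 Q -> s_affine a P -> s_affine a Q.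
Proof. by move=> PQ [a_s [c Pc]]; split => //; exists c => z; rewrite -PQ. Qed.

Lemma s_affine_cst (c : R[i]) : s_affine (fun=> 0) (fun=> c).
Proof.
by split => // ; exists c => z; rewrite big1 ?addr0 // => i _; rewrite mul0r.
Qed.

Lemma s_affineD a b P Q : s_affine a P -> s_affine b Q ->
  s_affine (fun i => a i + b i) (fun z => P z + Q z).
Proof.
move=> [a_s [c Pc]] [b_s [e Qe]]; split => [i si|]; first by rewrite a_s ?b_s ?addr0.
exists (c + e) => z; rewrite Pc Qe addrACA -big_split /=.
by congr (_ + _); apply: eq_bigr => i _; rewrite mulrDl.
Qed.

Lemma s_affineZ (k : R[i]) a P : s_affine a P ->
  s_affine (fun i => k * a i) (fun z => k * P z).
Proof.
move=> [a_s [c Pc]]; split => [i si|]; first by rewrite a_s ?mulr0.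
by exists (k * c) => z; rewrite Pc mulrDr mulr_sumr; under eq_bigr do rewrite mulrA.
Qed.

Lemma s_affine_sum N (F : 'I_N -> pt R d -> R[i]) :
  (forall n, exists a, s_affine a (F n)) ->
  exists a, s_affine a (fun z => \sum_(n < N) F n z).
Proof.
elim: N F => [|N IH] F F_aff.
  by exists (fun=> 0); apply: eq_s_affine (s_affine_cst 0) => z; rewrite big_ord0.
have [a aF] := IH (fun n => F (widen_ord (leqnSn N) n)) (fun n => F_aff _).
have [b bF] := F_aff ord_max.
exists (fun i => a i + b i); apply: eq_s_affine (s_affineD aF bF) => z.
by rewrite big_ord_recr.
Qed.

Lemma s_affine_monomial (b : 'I_d -> nat) : (\sum_(i < d) s i * b i <= 1)%N ->
  exists a, s_affine a (fun z => \prod_(i < d) ((z i)%:C)%C ^+ b i).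
Proof.
move=> weight_le1.
have [/forallP b0|/forallPn [j /negbTE bj0]] := boolP [forall i, b i == 0%N].
  exists (fun=> 0); apply: eq_s_affine (s_affine_cst 1) => z.
  by rewrite big1 // => i _; rewrite (eqP (b0 i)).
move: weight_le1; rewrite (bigD1 j) //=.
have := s_gt0 j; set rest := (\sum_(i | i != j) _)%N => sj_gt0 weight_le1.
have sj1 : s j = 1%N by move: bj0 => /negbT; rewrite -lt0n; nia.
have bj1 : b j = 1%N by move: bj0 => /negbT; rewrite -lt0n; nia.
have bi0 i : i != j -> b i = 0%N.
  move=> ij; have : (s i * b i <= rest)%N by rewrite /rest (bigD1 i) //= leq_addr.
  by have := s_gt0 i; nia.
exists (fun i => if i == j then 1 else 0); split => [i|].
  by case: (eqVneq i j) => [->|]; rewrite ?sj1.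
exists 0 => z; rewrite add0r (bigD1 j) //= [in RHS](bigD1 j) //= eqxx bj1 mul1r.
rewrite big1 => [|i ij]; last by rewrite bi0.
by rewrite big1 ?mulr1 ?addr0 // => i ij; rewrite (negbTE ij) mul0r.
Qed.

Lemma poly1_s_affine P : is_poly_k s 1 P -> exists a, s_affine a P.
Proof.
move=> [N [beta [c [weight_le1 P_sum]]]].
have [a aP] : exists a, s_affine a (fun z => \sum_(n < N) c n *
    \prod_(i < d) ((z i)%:C)%C ^+ beta n i).
  apply: s_affine_sum => n; have [a aF] := s_affine_monomial (weight_le1 n).
  by exists (fun i => c n * a i); exact: s_affineZ.
by exists a; apply: eq_s_affine aP => z; rewrite P_sum.
Qed.

Lemma s_affineB a P y z : s_affine a P ->
  P z - P y = \sum_(i < d) a i * ((z i - y i)%:C)%C.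
Proof.
move=> [_ [c Pc]]; rewrite !Pc opprD addrACA subrr add0r -sumrN -big_split /=.
by apply: eq_bigr => i _; rewrite rmorphB mulrBr.
Qed.

End UnitScaledAffine.

Section LocalHolderBound.
Context {R : realType} {d : nat} (s : 'I_d -> nat).
Hypothesis s_gt0 : forall i, (0 < s i)%N.
Variables (alpha eta M : R) (D : set (pt R d)) (U : pt R d -> pt R d -> R[i]).
Hypotheses (alpha_gt0 : 0 < alpha) (alpha_le1 : alpha <= 1).
Hypotheses (alpha_le_eta : alpha <= eta) (eta_le2 : eta <= 2) (M_ge0 : 0 <= M).
Hypothesis D_shift : forall i, s i = 1%N ->
  forall x y, D x -> D y -> D (y + sdist s x y *: evec R i).
Hypothesis U_small : forall x y, D x -> D y ->
  cmod (U x y) <= M * sdist s x y `^ eta.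

Local Notation dist := (sdist s).

Definition is_jet x y (P : pt R d -> R[i]) := forall z, D z ->
  cmod (U x z - U y z - P z) <=
    M * dist y z `^ alpha * (dist x y + dist y z) `^ (eta - alpha).

Hypothesis U_jet : forall x y, D x -> D y ->
  exists P, is_poly_k s 1 P /\ is_jet x y P.

Let eta_gt0 : 0 < eta. Proof. exact: lt_le_trans alpha_gt0 alpha_le_eta. Qed.
Let q_ge0 : 0 <= eta - alpha. Proof. by rewrite subr_ge0. Qed.
Let q_le2 : eta - alpha <= 2. Proof. by rewrite lerBlDr ler_wpDr // ltW. Qed.

Lemma germ_diag y : D y -> U y y = 0.
Proof.
move=> Dy; apply/eqP; rewrite -cmod_le0; apply: le_trans (U_small Dy Dy) _.
by rewrite sdistxx // powR0 ?gt_eqF // mulr0.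
Qed.

Lemma jet_base x y P : D y -> is_jet x y P -> P y = U x y.
Proof.
move=> Dy /(_ y Dy); rewrite sdistxx // powR0 ?gt_eqF // mulr0 mul0r germ_diag //.
by rewrite subr0 cmod_le0 subr_eq0 => /eqP ->.
Qed.

Lemma jet_coef_bound x y P a i : D x -> D y -> is_jet x y P -> s_affine s a P ->
  s i = 1%N -> cmod (a i) * dist x y <= 10 * M * dist x y `^ eta.
Proof.
move=> Dx Dy Pjet aP si1; set h := dist x y; set w := y + h *: evec R i.
have h_ge0 : 0 <= h := sdist_ge0 s x y.
have Dw : D w := D_shift si1 Dx Dy.
have dyw : dist y w = h := sdist_evec s_gt0 y si1 h_ge0.
have dxw : dist x w <= 2 * h.
  by apply: le_trans (sdist_triangle s_gt0 x y w) _; rewrite dyw mulr2n mulrDl mul1r.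
have shiftE j : w j - y j = h * (if j == i then 1 else 0) by rewrite addrC addKr.
have Pw : P w - P y = a i * (h%:C)%C.
  rewrite (s_affineB _ _ aP) (bigD1 i) //= big1 => [|j ji].
    by rewrite shiftE eqxx mulr1 addr0.
  by rewrite shiftE (negbTE ji) mulr0 mulr0.
have -> : cmod (a i) * h = cmod (P w - P y) by rewrite Pw cmodM cmod_real ger0_norm.
have -> : P w - P y = U x w - U y w - U x y - (U x w - U y w - P w).
  by rewrite (jet_base Dy Pjet); ring.
have b1 : cmod (U x w) <= M * (4 * h `^ eta).
  apply: le_trans (U_small Dx Dw) _; apply: (ler_wpM2l M_ge0).
  by apply: powR_le_double; rewrite ?sdist_ge0 ?dxw ?(ltW eta_gt0) ?eta_le2.
have b2 : cmod (U y w) <= M * h `^ eta by rewrite -dyw U_small.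
have b3 : cmod (U x y) <= M * h `^ eta by rewrite U_small.
have b4 : cmod (U x w - U y w - P w) <= M * (4 * h `^ eta).
  apply: le_trans (Pjet w Dw) _; rewrite dyw -mulrA; apply: (ler_wpM2l M_ge0).
  rewrite -[h `^ eta](powR_mul_sub alpha) ?gt_eqF // mulrCA.
  apply: (ler_wpM2l (powR_ge0 _ _)); apply: powR_le_double; first by rewrite q_ge0 q_le2.
  by rewrite addr_ge0 //= mulr2n mulrDl mul1r.
apply: le_trans (ler_cmodB _ _) _; rewrite -/h in b3 *.
have := ler_cmodB (U x w - U y w) (U x y); have := ler_cmodB (U x w) (U y w).
lra.
Qed.

Lemma jet_increment_bound x y z P a : D x -> D y -> is_jet x y P ->
  s_affine s a P -> 0 < dist x y ->
  cmod (P z - P y) <= 10 * M * dist x y `^ (eta - 1) * dist y z.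
Proof.
move=> Dx Dy Pjet aP h_gt0; rewrite (s_affineB _ _ aP) /sdist mulr_sumr.
apply: le_trans (ler_cmod_sum _) _; apply: ler_sum => i _.
have K_ge0 : 0 <= 10 * M by rewrite mulr_ge0.
rewrite cmodM cmod_real distrC; have [si1|si_neq1] := eqVneq (s i) 1%N; last first.
  by rewrite aP.1 // cmod0 mul0r !mulr_ge0 ?powR_ge0.
rewrite si1 divr1 powRr1 //; apply: ler_wpM2r; first exact: normr_ge0.
have := jet_coef_bound Dx Dy Pjet aP si1.
by rewrite -(mulr_powRB1 (ltW h_gt0) eta_gt0) mulrCA [X in _ <= X]mulrC ler_pM2r.
Qed.

Lemma germ_increment_near x y z : D x -> D y -> D z -> dist x y <= dist y z ->
  cmod (U x y - U x z) <= 5 * M * dist y z `^ eta.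
Proof.
move=> Dx Dy Dz h_le_del; apply: le_trans (ler_cmodB _ _) _.
have b1 : cmod (U x y) <= M * dist y z `^ eta.
  apply: le_trans (U_small Dx Dy) _; apply: (ler_wpM2l M_ge0).
  by rewrite ge0_ler_powR ?nnegrE ?sdist_ge0 ?(ltW eta_gt0).
have b2 : cmod (U x z) <= M * (4 * dist y z `^ eta).
  apply: le_trans (U_small Dx Dz) _; apply: (ler_wpM2l M_ge0).
  apply: powR_le_double; rewrite ?sdist_ge0 ?(ltW eta_gt0) ?eta_le2 //=.
  by have := sdist_triangle s_gt0 x y z; lra.
lra.
Qed.

Lemma germ_increment_far x y z : D x -> D y -> D z -> dist y z < dist x y ->
  cmod (U x y - U x z) <= 15 * M * (dist y z `^ alpha * dist x y `^ (eta - alpha)).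
Proof.
move=> Dx Dy Dz del_lt_h; set h := dist x y; set del := dist y z.
have del_ge0 : 0 <= del := sdist_ge0 s y z.
have h_gt0 : 0 < h := le_lt_trans del_ge0 del_lt_h.
have [P [/(poly1_s_affine s_gt0) [a aP] Pjet]] := U_jet Dx Dy.
have -> : U x y - U x z = (P y - P z) - U y z - (U x z - U y z - P z).
  by rewrite (jet_base Dy Pjet); ring.
set A := del `^ alpha * h `^ (eta - alpha).
have b1 : cmod (P y - P z) <= 10 * M * A.
  rewrite -cmodN opprB; apply: le_trans (jet_increment_bound z Dx Dy Pjet aP h_gt0) _.
  rewrite -mulrA; apply: ler_wpM2l; first by rewrite mulr_ge0.
  by apply: powR_interp_le; rewrite ?alpha_gt0 ?alpha_le1 ?del_ge0 ?(ltW del_lt_h).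
have b2 : cmod (U y z) <= M * A.
  apply: le_trans (U_small Dy Dz) _; apply: (ler_wpM2l M_ge0).
  by rewrite powR_le_split ?alpha_gt0 ?alpha_le_eta ?del_ge0 ?(ltW del_lt_h).
have b3 : cmod (U x z - U y z - P z) <= M * (4 * A).
  apply: le_trans (Pjet z Dz) _; rewrite -mulrA; apply: (ler_wpM2l M_ge0).
  rewrite mulrCA; apply: (ler_wpM2l (powR_ge0 _ _)).
  apply: powR_le_double; first by rewrite q_ge0 q_le2.
  apply/andP; split; first by rewrite addr_ge0 // ltW.
  by rewrite mulr2n mulrDl mul1r lerD2l ltW.
apply: le_trans (ler_cmodB _ _) _.
have := ler_cmodB (P y - P z) (U y z).
move: b1 b2 b3; clearbody A h del; lra.
Qed.

Lemma germ_increment_local x y z r : D x -> D y -> D z ->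
  dist x y < r -> dist x z < r ->
  cmod (U x y - U x z) <= 20 * M * r `^ (eta - alpha) * dist y z `^ alpha.
Proof.
move=> Dx Dy Dz xy_r xz_r.
have r_ge0 : 0 <= r := le_trans (sdist_ge0 s x y) (ltW xy_r).
rewrite -mulrA [r `^ _ * _]mulrC.
have [h_le_del|del_lt_h] := leP (dist x y) (dist y z).
  apply: le_trans (germ_increment_near Dx Dy Dz h_le_del) _.
  have alpha_eta : 0 < alpha <= eta by rewrite alpha_gt0 alpha_le_eta.
  have del_2r : 0 <= dist y z <= 2 * r.
    rewrite sdist_ge0; apply: le_trans (sdist_triangle s_gt0 y x z) _.
    by rewrite (sdistC s y x) mulr2n mulrDl mul1r lerD // ltW.
  apply: le_trans (ler_wpM2l _ (powR_le_split alpha_eta del_2r)) _.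
    by rewrite mulr_ge0.
  rewrite (_ : 20 * M = 5 * M * 4); last by ring.
  rewrite -mulrA; apply: ler_wpM2l; first by rewrite mulr_ge0.
  rewrite mulrCA; apply: (ler_wpM2l (powR_ge0 _ _)).
  by apply: powR_le_double; rewrite ?q_ge0 ?q_le2 ?mulr_ge0 ?lexx.
apply: le_trans (germ_increment_far Dx Dy Dz del_lt_h) _.
have hq_le : dist x y `^ (eta - alpha) <= r `^ (eta - alpha).
  by rewrite ge0_ler_powR ?nnegrE ?sdist_ge0 ?(ltW xy_r).
apply: le_trans (ler_wpM2l _ (ler_wpM2l (powR_ge0 _ _) hq_le)) _.
  by rewrite mulr_ge0.
by apply: ler_wpM2r; rewrite ?mulr_ge0 ?powR_ge0 // ler_wpM2r // ler_nat.
Qed.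

End LocalHolderBound.

Lemma floor_eq1 {R : realType} (eta : R) : 1 <= eta -> eta < 2 ->
  `|Num.floor eta|%N = 1%N.
Proof. by move=> eta_ge1 eta_lt2; rewrite (@floor_def _ _ 1) //= eta_ge1 eta_lt2. Qed.

Lemma germ_holder_quotient {R : realType} {d : nat} (s : 'I_d -> nat)
    (alpha eta M1 M2 r : R) (D : set (pt R d)) (U : pt R d -> pt R d -> R[i]) x y z :
  (forall i, (0 < s i)%N) -> 0 < alpha -> alpha < 1 -> 1 < eta -> eta < 2 ->
  (forall i, s i = 1%N -> forall x y, D x -> D y -> D (y + sdist s x y *: evec R i)) ->
  0 < M1 -> (forall x y, D x -> D y -> cmod (U x y) <= M1 * sdist s x y `^ eta) ->
  0 < M2 -> (forall x y, D x -> D y -> exists P, is_poly_k s `|Num.floor eta|%N P /\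
     forall z, D z -> cmod (U x z - U y z - P z) <=
       M2 * sdist s y z `^ alpha * (sdist s x y + sdist s y z) `^ (eta - alpha)) ->
  D x -> D y -> D z -> sdist s x y < r -> sdist s x z < r ->
  cmod (U x y - U x z) / sdist s y z `^ alpha <= (M1 + M2) * (20 * r `^ (eta - alpha)).
Proof.
move=> s_gt0 alpha_gt0 alpha_lt1 eta_gt1 eta_lt2 D_shift.
move=> M1_gt0 U_small M2_gt0 U_jet Dx Dy Dz xy_r xz_r.
have [M1_le M2_le] : M1 <= M1 + M2 /\ M2 <= M1 + M2.
  by split; [rewrite lerDl ltW | rewrite lerDr ltW].
have M_ge0 : 0 <= M1 + M2 by rewrite addr_ge0 ?ltW.
rewrite floor_eq1 ?(ltW eta_gt1) // in U_jet.
apply: ler_wpdivrMr; rewrite ?powR_ge0 ?mulr_ge0 ?powR_ge0 //.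
rewrite mulrCA mulrA.
apply: (germ_increment_local s_gt0 _ (ltW alpha_lt1) _ _ M_ge0 D_shift) => //.
- exact/ltW/(lt_trans alpha_lt1).
- exact: ltW.
- move=> a b Da Db; apply: le_trans (U_small a b Da Db) _.
  by apply: ler_wpM2r; rewrite ?powR_ge0.
- move=> a b Da Db; have [P [P1 Pjet]] := U_jet a b Da Db; exists P; split => // c Dc.
  apply: le_trans (Pjet c Dc) _; rewrite -!mulrA; apply: ler_wpM2r => //.
  by rewrite mulr_ge0 ?powR_ge0.
Qed.

Unset Implicit Arguments.

Theorem lemma2p5 (R : realType) (d : nat) (s : 'I_d -> nat)
  (hs : forall i, (0 < s i)%N) (alpha eta : R)
  (h0a : 0 < alpha) (ha1 : alpha < 1) (h1e : 1 < eta) (he2 : eta < 2) :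
  exists C : R, 0 < C /\
  forall (D : set (pt R d)),
    (forall i : 'I_d, s i = 1%N ->
       forall x y, D x -> D y -> D (y + sdist s x y *: evec R i)) ->
  forall (U : pt R d -> pt R d -> R[i]), is_germ s D U ->
  forall r : R, 0 < r ->
    (ereal_sup [set Hsemi s alpha (D `&` sball s x r) (U x) | x in D]
      <= C%:E * (Gnorm s eta D U + Gsemi s eta alpha D U)
         * (powR r (eta - alpha))%:E)%E.
Proof.
exists 20; split => // D D_shift U _ r r_gt0.
apply: ge_ereal_sup => _ [x Dx <-].
apply: ge_ereal_sup => _ [y [z [[Dy xy_r] [[Dz xz_r] [_ ->]]]]].
set c := 20 * r `^ (eta - alpha); have c_gt0 : 0 < c by rewrite mulr_gt0 ?powR_gt0.
rewrite (muleC 20%:E) -muleA -EFinM -/c.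
rewrite -[X in X%:E](divfK (lt0r_neq0 c_gt0)) EFinM.
apply: lee_wpmul2r; first by rewrite lee_fin ltW.
apply: le_ereal_infD => [M [/ltW]|M [/ltW]|M1 M2 [M1_gt0 U_small] [M2_gt0 U_jet]] //.
rewrite ler_pdivrMr //.
exact: (germ_holder_quotient hs h0a ha1 h1e he2 D_shift M1_gt0 U_small M2_gt0 U_jet).
Qed.
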